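(* Let $n$ and $k$ be positive integers. Then the posets $\widetilde{\mathrm{NC}}^{(2k)}(2n+1)$ and $\mathrm{NC}^{(2k)}(n;k)$ (defined in the context) are isomorphic.
   Context: For a positive integer $N$, a partition $\pi$ of $[N]=\{1,\dots,N\}$ is noncrossing if there are no $a<b<c<d$ with $a,c$ in one block and $b,d$ in a different block. All posets of partitions are ordered by refinement ($\pi\le\sigma$ if every block of $\sigma$ is a union of blocks of $\pi$). Let $m=k(2n+1)$ and let $\rho$ be the $180^\circ$ rotation of $[2m]$ arranged on a circle: $\rho(i)=i+m$ for $1\le i\le m$, $\rho(i)=i-m$ for $m<i\le 2m$. $\widetilde{\mathrm{NC}}^{(2k)}(2n+1)$ is the poset of noncrossing partitions of $[2k(2n+1)]$ all of whose block sizes are divisible by $2k$ and which are invariant under $\rho$ (i.e. $\rho(B)$ is a block whenever $B$ is). For integers $K,r$ with $0<r<K$, $\mathrm{NC}^{(K)}(n;r)$ is the poset of noncrossing partitions of $[Kn+r]$ in which the sizes of all but one of the blocks are divisible by $K$; here $K=2k$, $r=k$. *)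

(* Ground set [N] = {1..N} is modelled by 'I_N = {0..N-1}
   (shift by one; order-preserving, so noncrossingness is unaffected). *)
From mathcomp Require Import all_boot all_order.
Set Implicit Arguments. Unset Strict Implicit. Unset Printing Implicit Defensive.

Definition set_partition (N : nat) (P : {set {set 'I_N}}) : Prop :=
  partition P [set: 'I_N].

Definition noncrossing (N : nat) (P : {set {set 'I_N}}) : Prop :=
  forall (B C : {set 'I_N}) (a b c d : 'I_N),
    B \in P -> C \in P -> B != C ->
    a \in B -> c \in B -> b \in C -> d \in C ->
    ~ ((a < b)%N /\ (b < c)%N /\ (c < d)%N).

Definition refines (N : nat) (P Q : {set {set 'I_N}}) : Prop :=
  forall B, B \in Q -> exists S : {set {set 'I_N}}, S \subset P /\ B = cover S.

(* 180-degree rotation of [2m] (0-indexed): i |-> i+m if i<m, i-m otherwise. *)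
Definition rho_nat (m i : nat) : nat := if (i < m)%N then (i + m)%N else (i - m)%N.

Definition rho_invariant (m : nat) (P : {set {set 'I_(2 * m)}}) : Prop :=
  forall B, B \in P -> exists B', B' \in P /\
    forall x : 'I_(2 * m), x \in B' <-> exists y, y \in B /\ val x = rho_nat m (val y).

Definition NCtilde (k n : nat) (P : {set {set 'I_(2 * (k * (2 * n + 1)))}}) : Prop :=
  [/\ set_partition P, noncrossing P,
      (forall B, B \in P -> (2 * k %| #|B|)%N)
    & rho_invariant P].

Definition NCr (K n r : nat) (P : {set {set 'I_(K * n + r)}}) : Prop :=
  [/\ set_partition P, noncrossing P
    & exists B0, B0 \in P /\ forall B, B \in P -> B != B0 -> (K %| #|B|)%N].

Definition poset_iso (N M : nat) (Pa : {set {set 'I_N}} -> Prop)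
    (Pb : {set {set 'I_M}} -> Prop) : Prop :=
  exists f : {set {set 'I_N}} -> {set {set 'I_M}},
    [/\ (forall P, Pa P -> Pb (f P)),
        (forall P Q, Pa P -> Pa Q -> f P = f Q -> P = Q),
        (forall Q, Pb Q -> exists P, Pa P /\ f P = Q)
      & (forall P Q, Pa P -> Pa Q -> (refines P Q <-> refines (f P) (f Q)))].

From mathcomp Require Import all_boot all_order zify.
Set Implicit Arguments. Unset Strict Implicit. Unset Printing Implicit Defensive.

(* Let m = k(2n+1). A rho-invariant noncrossing partition P of [2m] whose blocks
   have sizes divisible by 2k has a rho-stable block: otherwise, picking one block
   out of each pair {B, rho B} covers exactly half of the circle, i.e. m points, by
   blocks of size divisible by 2k, which is impossible as 2k does not divide m.
   Cutting the circle at a point z of that block and identifying x with rho x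
   folds P onto a noncrossing partition of [m] in which only the image of the
   stable block can have size not divisible by 2k. Conversely a partition of [m]
   with one exceptional block unfolds around a point of that block: the
   exceptional block lifts to a rho-symmetric block, every other block to its copy
   in the window starting at that point together with the rho-image of the copy.
   On the "same block" relations both maps are explicit and monotone, which gives
   the order isomorphism. *)

Record equiv_on (N : nat) (R : rel nat) : Prop := EquivOn {
  equiv_on_refl : forall a, a < N -> R a a;
  equiv_on_sym : forall a b, R a b -> R b a;
  equiv_on_trans : forall a b c, R a b -> R b c -> R a c;
  equiv_on_dom : forall a b, R a b -> (a < N) && (b < N) }.

Definition noncrossing_rel (N : nat) (R : rel nat) : Prop :=
  forall a b c d, a < b -> b < c -> c < d -> d < N -> R a c -> R b d -> R a b.

Lemma noncrossing_rel_eq N (R R' : rel nat) :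
  (forall a b, a < N -> b < N -> R a b = R' a b) ->
  noncrossing_rel N R -> noncrossing_rel N R'.
Proof.
move=> E nc a b c d ab bc cd dN; rewrite -!E; try lia.
exact: nc.
Qed.

(** * Partitions as equivalence relations *)

Section BlockRelation.

Variable N : nat.
Implicit Types (P Q : {set {set 'I_N}}) (R : rel nat).

(* The relation lives on nat, so that points of [2m] and of [m] can be compared
   and shifted arithmetically. *)
Definition block_rel P : rel nat := fun a b =>
  [exists x : 'I_N, exists y : 'I_N, [&& val x == a, val y == b & y \in pblock P x]].

Lemma block_relE P (x y : 'I_N) : block_rel P x y = (y \in pblock P x).
Proof.
apply/existsP/idP => [[x' /existsP[y' /and3P[/eqP/val_inj-> /eqP/val_inj->]]]//|].
by exists x; apply/existsP; exists y; rewrite !eqxx.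
Qed.

Lemma block_relP P a b :
  reflect (exists x y : 'I_N, [/\ val x = a, val y = b & y \in pblock P x])
          (block_rel P a b).
Proof.
apply: (iffP idP) => [/existsP[x /existsP[y /and3P[/eqP ? /eqP ? ?]]]|[x [y [<- <- ?]]]].
  by exists x, y.
by rewrite block_relE.
Qed.

Lemma mem_pblock_partition P (x : 'I_N) : partition P setT -> x \in pblock P x.
Proof. by move=> pP; rewrite mem_pblock (cover_partition pP). Qed.

Lemma pblock_partition P (x : 'I_N) : partition P setT -> pblock P x \in P.
Proof. by move=> pP; rewrite pblock_mem // (cover_partition pP). Qed.

Lemma block_rel_equiv P : partition P setT -> equiv_on N (block_rel P).
Proof.
move=> pP; have tP := partition_trivIset pP.
split.
- by move=> a aN; rewrite -[a]/(val (Ordinal aN)) block_relE mem_pblock_partition.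
- move=> _ _ /block_relP[x [y [<- <- yx]]].
  by rewrite block_relE (same_pblock tP yx) mem_pblock_partition.
- move=> _ _ _ /block_relP[x [y [<- <- yx]]] /block_relP[y' [z [/val_inj-> <- zy]]].
  by rewrite block_relE -(same_pblock tP yx).
- by move=> _ _ /block_relP[x [y [<- <- _]]]; rewrite !ltn_ord.
Qed.

Lemma block_rel_inj P Q : partition P setT -> partition Q setT ->
  block_rel P =2 block_rel Q -> P = Q.
Proof.
move=> pP pQ E.
rewrite -(equivalence_partition_pblock pP) -(equivalence_partition_pblock pQ).
by apply: eq_imset => x; apply/setP => y; rewrite !inE -!block_relE E.
Qed.

Lemma noncrossingE P : partition P setT ->
  noncrossing P <-> noncrossing_rel N (block_rel P).
Proof.
move=> pP; have tP := partition_trivIset pP.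
have inP x : x \in pblock P x := mem_pblock_partition x pP.
split=> [nc a b c d ab bc cd dN Rac Rbd | nc B C a b c d BP CP BC aB cB bC dC [ab [bc cd]]].
  have [aN bN cN] : [/\ a < N, b < N & c < N] by split; lia.
  pose a' := Ordinal aN; pose b' := Ordinal bN; pose c' := Ordinal cN; pose d' := Ordinal dN.
  move: Rac Rbd; rewrite -[a]/(val a') -[b]/(val b') -[c]/(val c') -[d]/(val d') !block_relE.
  move=> ac bd; apply/negPn/negP => nab.
  have ne : pblock P a' != pblock P b' by apply: contra nab => /eqP->; apply: inP.
  exact: (nc _ _ _ _ _ _ (pblock_partition _ pP) (pblock_partition _ pP) ne (inP a') ac (inP b') bd
    (conj ab (conj bc cd))).
move: (nc a b c d ab bc cd (ltn_ord d)).
rewrite !block_relE !(def_pblock tP BP aB) (def_pblock tP CP bC) => /(_ cB dC) bB.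
by move/eqP: BC; apply; rewrite -(def_pblock tP BP bB) (def_pblock tP CP bC).
Qed.

Lemma refinesE P Q : partition P setT -> partition Q setT ->
  refines P Q <-> subrel (block_rel P) (block_rel Q).
Proof.
move=> pP pQ; split=> [ref _ _ /block_relP[x [y [<- <- yx]]] | sub B BQ].
  have [S [SP defB]] := ref _ (pblock_partition x pQ).
  have /bigcupP[A AS xA] : x \in cover S by rewrite -defB mem_pblock_partition.
  rewrite (def_pblock (partition_trivIset pP) (subsetP SP _ AS) xA) in yx.
  by rewrite block_relE defB; apply/bigcupP; exists A.
exists [set A in P | A \subset B]; split; first by apply/subsetP => A; rewrite inE => /andP[].
apply/setP => y; apply/idP/bigcupP => [yB|[A]]; last by rewrite inE => /andP[_ /subsetP]; apply.
exists (pblock P y); last exact: mem_pblock_partition.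
rewrite inE pblock_partition //=; apply/subsetP => z zy.
by move: (sub y z); rewrite !block_relE (def_pblock (partition_trivIset pQ) BQ yB); apply.
Qed.

Definition rel_partition R : {set {set 'I_N}} :=
  equivalence_partition (fun x y : 'I_N => R x y) setT.

Section RelPartition.

Variables (R : rel nat) (eR : equiv_on N R).

Let eqrelR : {in [set: 'I_N] & &, equivalence_rel (fun x y : 'I_N => R x y)}.
Proof.
move=> x y z _ _ _; split=> [|/= Rxy]; first exact/(equiv_on_refl eR)/ltn_ord.
apply/idP/idP => /= [Rxz|Ryz]; first exact: (equiv_on_trans eR (equiv_on_sym eR Rxy) Rxz).
exact: (equiv_on_trans eR Rxy Ryz).
Qed.

Lemma rel_partitionP : partition (rel_partition R) setT.
Proof. exact: equivalence_partitionP. Qed.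

Lemma pblock_rel_partition (x : 'I_N) :
  pblock (rel_partition R) x = [set y : 'I_N | R x y].
Proof.
by apply/setP => y; rewrite inE pblock_equivalence_partition ?inE //; apply: eqrelR.
Qed.

Lemma block_rel_partition : block_rel (rel_partition R) =2 R.
Proof.
move=> a b; apply/block_relP/idP => [[x [y [<- <-]]]|Rab].
  by rewrite pblock_rel_partition inE.
have /andP[aN bN] := equiv_on_dom eR Rab.
by exists (Ordinal aN), (Ordinal bN); rewrite pblock_rel_partition inE.
Qed.

End RelPartition.

End BlockRelation.

Lemma card_closed_union N (P : {set {set 'I_N}}) (U : {set 'I_N}) : partition P setT ->
  (forall x y, x \in U -> y \in pblock P x -> y \in U) ->
  #|U| = \sum_(B in [set B in P | B \subset U]) #|B|.
Proof.
move=> pP closedU; apply: card_partition; apply/and3P; split.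
- rewrite eqEsubset; apply/andP; split; first by apply/bigcupsP => B; rewrite inE => /andP[].
  apply/subsetP => x xU; apply/bigcupP; exists (pblock P x); last exact: mem_pblock_partition.
  by rewrite inE pblock_partition //=; apply/subsetP => y; apply: closedU.
- by apply: trivIsetS (partition_trivIset pP); apply/subsetP => B; rewrite inE => /andP[].
- by rewrite inE negb_and (partition0 pP).
Qed.

Lemma dvdn_card_closed N d (P : {set {set 'I_N}}) (U : {set 'I_N}) : partition P setT ->
  (forall B, B \in P -> d %| #|B|) ->
  (forall x y, x \in U -> y \in pblock P x -> y \in U) -> d %| #|U|.
Proof.
move=> pP dvdP closedU; rewrite (card_closed_union pP closedU).
by apply: dvdn_sum => B; rewrite inE => /andP[/dvdP].
Qed.

(** * The half-turn and cyclic shifts *)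

Section HalfTurn.

Variable m : nat.
Implicit Types (x y : nat) (R : rel nat).

Lemma rho_nat_lt x : x < 2 * m -> rho_nat m x < 2 * m.
Proof. by rewrite /rho_nat; case: ifP; lia. Qed.

Lemma rho_natK x : x < 2 * m -> rho_nat m (rho_nat m x) = x.
Proof. by rewrite /rho_nat; case: (ltnP x m) => ? ?; case: ifP; lia. Qed.

Lemma rho_nat_lo x : x < m -> rho_nat m x = x + m.
Proof. by rewrite /rho_nat => ->. Qed.

Lemma rho_nat_hi x : rho_nat m (x + m) = x.
Proof. by rewrite /rho_nat ltnNge leq_addl addnK. Qed.

Definition rho_ord (x : 'I_(2 * m)) : 'I_(2 * m) := Ordinal (rho_nat_lt (ltn_ord x)).

Lemma rho_ordK : involutive rho_ord.
Proof. by move=> x; apply: val_inj; rewrite /= rho_natK. Qed.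

Definition rho_closed R := forall a b, R a b -> R (rho_nat m a) (rho_nat m b).

Lemma rho_closedE R x y : rho_closed R -> x < 2 * m -> y < 2 * m ->
  R (rho_nat m x) y = R x (rho_nat m y).
Proof.
by move=> rR xN yN; apply/idP/idP => /rR; rewrite rho_natK.
Qed.

Lemma rho_invariantE (P : {set {set 'I_(2 * m)}}) : partition P setT ->
  rho_invariant P <-> rho_closed (block_rel P).
Proof.
move=> pP; have tP := partition_trivIset pP.
split=> [rP _ _ /block_relP[x [y [<- <- yx]]] | rR B BP].
  have [B' [B'P defB']] := rP _ (pblock_partition x pP).
  have rx : rho_ord x \in B' by apply/defB'; exists x; rewrite mem_pblock_partition.
  have ry : rho_ord y \in B' by apply/defB'; exists y.
  by rewrite -[rho_nat m x]/(val (rho_ord x)) -[rho_nat m y]/(val (rho_ord y))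
    block_relE (def_pblock tP B'P rx).
have /set0Pn[x xB] := partition_neq0 pP BP.
exists (pblock P (rho_ord x)); split=> [|y]; first exact: pblock_partition.
rewrite -(def_pblock tP BP xB); split=> [yr | [y' [y'x ey]]].
  exists (rho_ord y); split; last by rewrite /= rho_natK.
  move: (rR (rho_ord x) y); rewrite block_relE /= rho_natK // => /(_ yr).
  by rewrite -[rho_nat m y]/(val (rho_ord y)) block_relE.
have -> : y = rho_ord y' by apply: val_inj.
move: (rR x y'); rewrite block_relE => /(_ y'x).
by rewrite -[rho_nat m x]/(val (rho_ord x)) -[rho_nat m y']/(val (rho_ord y')) block_relE.
Qed.

End HalfTurn.

Lemma card_rho_half m (U : {set 'I_(2 * m)}) :
  (forall x, (rho_ord x \in U) = (x \notin U)) -> #|U| = m.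
Proof.
move=> rhoU; have := cardsC U; rewrite card_ord.
have -> : ~: U = @rho_ord m @^-1: U by apply/setP => x; rewrite !inE rhoU.
by rewrite card_preimset; [lia | exact: can_inj (@rho_ordK m)].
Qed.

Lemma rho_pair_central m R x : equiv_on (2 * m) R -> x < 2 * m -> R x (rho_nat m x) ->
  exists2 z, z < m & R z (z + m).
Proof.
move=> eR xN Rx; case: (ltnP x m) => xm; first by exists x; rewrite // -(rho_nat_lo xm).
exists (x - m); first lia.
rewrite subnK // (_ : x - m = rho_nat m x); first exact: (equiv_on_sym eR Rx).
by rewrite /rho_nat ltnNge xm.
Qed.

Definition cyclically_ordered (a b c d : nat) : Prop :=
  [\/ [/\ a < b, b < c & c < d], [/\ b < c, c < d & d < a],
      [/\ c < d, d < a & a < b] | [/\ d < a, a < b & b < c]].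

Ltac solve_cyclically_ordered :=
  first [ exfalso; lia | by constructor 1; split; lia | by constructor 2; split; lia
        | by constructor 3; split; lia | by constructor 4; split; lia ].

Section CyclicNoncrossing.

Variables (N : nat) (R : rel nat).
Hypotheses (eR : equiv_on N R) (ncR : noncrossing_rel N R).

Lemma noncrossing_rel_cyclic a b c d : a < N -> b < N -> c < N -> d < N ->
  cyclically_ordered a b c d -> R a c -> R b d -> R a b.
Proof.
move=> aN bN cN dN [] [h1 h2 h3] Rac Rbd.
- exact: (ncR h1 h2 h3 dN Rac Rbd).
- have Rbc := ncR h1 h2 h3 aN Rbd (equiv_on_sym eR Rac).
  exact: (equiv_on_trans eR Rac (equiv_on_sym eR Rbc)).
- have Rcd := ncR h1 h2 h3 bN (equiv_on_sym eR Rac) (equiv_on_sym eR Rbd).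
  exact: (equiv_on_trans eR (equiv_on_trans eR Rac Rcd) (equiv_on_sym eR Rbd)).
- have Rda := ncR h1 h2 h3 cN (equiv_on_sym eR Rbd) Rac.
  exact: (equiv_on_trans eR (equiv_on_sym eR Rda) (equiv_on_sym eR Rbd)).
Qed.

Variable r : nat.
Hypothesis rN : r <= N.

Definition cshift a := if a + r < N then a + r else a + r - N.

Definition cshift_rel : rel nat := fun a b => [&& a < N, b < N & R (cshift a) (cshift b)].

Lemma cshift_lt a : a < N -> cshift a < N.
Proof. by rewrite /cshift; case: ifP; lia. Qed.

Lemma cshift_cyclically_ordered a b c d : a < b -> b < c -> c < d -> d < N ->
  cyclically_ordered (cshift a) (cshift b) (cshift c) (cshift d).
Proof.
rewrite /cshift /cyclically_ordered => *.
do 4 case: ifP => ?.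
all: solve_cyclically_ordered.
Qed.

Lemma cshift_rel_equiv : equiv_on N cshift_rel.
Proof.
split.
- by move=> a aN; rewrite /cshift_rel aN (equiv_on_refl eR) // cshift_lt.
- by move=> a b /and3P[aN bN Rab]; rewrite /cshift_rel aN bN (equiv_on_sym eR).
- move=> a b c /and3P[aN _ Rab] /and3P[_ cN Rbc].
  by rewrite /cshift_rel aN cN (equiv_on_trans eR Rab Rbc).
- by move=> a b /and3P[-> -> _].
Qed.

Lemma cshift_rel_noncrossing : noncrossing_rel N cshift_rel.
Proof.
move=> a b c d ab bc cd dN /and3P[_ _ Rac] /and3P[_ _ Rbd].
have [aN bN cN] : [/\ a < N, b < N & c < N] by split; lia.
rewrite /cshift_rel aN bN; apply: noncrossing_rel_cyclic Rac Rbd; rewrite ?cshift_lt //.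
exact: cshift_cyclically_ordered.
Qed.

End CyclicNoncrossing.

Ltac case_ifs := repeat match goal with
  | |- context [if ?b then _ else _] => let E := fresh "E" in destruct b eqn:E
  end.

(** * Folding and unfolding *)

(* [fold_rel m R] identifies x with its half-turn x + m. [unfold_rel m S c] lifts a
   relation on [m] through [fold_pt]: everything related to c lifts to one
   rho-symmetric class, and every other class lifts to its copy in the window
   [c, c + m) and to the rho-image of that copy. *)
Definition in_window (m z x : nat) := (z <= x) && (x < z + m).

Definition to_window (m z x : nat) := if in_window m z x then x else rho_nat m x.

Definition fold_rel (m : nat) (R : rel nat) : rel nat :=
  fun i j => [&& i < m, j < m & R i j || R i (j + m)].

Definition fold_pt (m x : nat) := if x < m then x else x - m.

Definition unfold_rel (m : nat) (S : rel nat) (c : nat) : rel nat := fun x y =>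
  [&& x < 2 * m, y < 2 * m, S (fold_pt m x) (fold_pt m y)
    & S (fold_pt m x) c || (in_window m c x == in_window m c y)].

Lemma fold_pt_lt m x : x < 2 * m -> fold_pt m x < m.
Proof. by rewrite /fold_pt; case: ifP; lia. Qed.

Lemma fold_pt_cases m x : x < 2 * m -> fold_pt m x = x \/ fold_pt m x = rho_nat m x.
Proof. by rewrite /fold_pt /rho_nat; case: ifP; [left|right]. Qed.

Lemma fold_pt_rho m x : x < 2 * m -> fold_pt m (rho_nat m x) = fold_pt m x.
Proof. by rewrite /fold_pt /rho_nat => ?; case_ifs; lia. Qed.

Lemma in_window_rho m z x : z < m -> x < 2 * m ->
  in_window m z (rho_nat m x) = ~~ in_window m z x.
Proof. by rewrite /in_window /rho_nat => ? ?; case_ifs; apply/idP/idP; lia. Qed.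

Lemma to_window_cases m z x : to_window m z x = x \/ to_window m z x = rho_nat m x.
Proof. by rewrite /to_window; case: ifP; [left|right]. Qed.

Lemma to_window_lt m z x : x < 2 * m -> to_window m z x < 2 * m.
Proof. by rewrite /to_window; case: ifP => // _; apply: rho_nat_lt. Qed.

Lemma to_window_rho m z x : z < m -> x < 2 * m ->
  to_window m z (rho_nat m x) = to_window m z x.
Proof. by move=> zm xN; rewrite /to_window in_window_rho // rho_natK //; case: in_window. Qed.

Lemma to_window_lo m z i : i < m -> to_window m z i = if z <= i then i else i + m.
Proof.
by move=> im; rewrite /to_window /in_window rho_nat_lo //; case_ifs; lia.
Qed.

Lemma in_window_hi m c u : c < m -> u < m -> in_window m c (u + m) = ~~ in_window m c u.
Proof. by move=> cm um; rewrite -(rho_nat_lo um) in_window_rho //; lia. Qed.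

Lemma fold_pt_lo m x : x < m -> fold_pt m x = x.
Proof. by rewrite /fold_pt => ->. Qed.

Lemma fold_pt_ge m x : m <= x -> fold_pt m x = x - m.
Proof. by rewrite /fold_pt ltnNge => ->. Qed.

Lemma in_window0 m x : in_window m 0 x = (x < m).
Proof. by rewrite /in_window add0n. Qed.

Lemma fold_pt_hi m x : fold_pt m (x + m) = x.
Proof. by rewrite /fold_pt ltnNge leq_addl addnK. Qed.

Lemma in_window_fold_pt m c x : c < m -> x < 2 * m ->
  in_window m c x = ((c <= fold_pt m x) == (x < m)).
Proof. by rewrite /in_window /fold_pt => ? ?; case_ifs; apply/eqP; apply/idP/idP; lia. Qed.

Lemma to_window_fold_pt m z y : y < 2 * m -> in_window m z y ->
  to_window m z (fold_pt m y) = y.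
Proof. by move=> yN; rewrite /to_window /in_window /fold_pt /rho_nat; case_ifs; lia. Qed.

Lemma fold_rel_mono m (R R' : rel nat) : subrel R R' -> subrel (fold_rel m R) (fold_rel m R').
Proof. by move=> sub a b /and3P[am bm /orP[]/sub Rab]; rewrite /fold_rel am bm Rab ?orbT. Qed.

Lemma fold_rel_ext m (R R' : rel nat) : R =2 R' -> fold_rel m R =2 fold_rel m R'.
Proof. by move=> E a b; rewrite /fold_rel !E. Qed.

Lemma unfold_rel_ext m (S S' : rel nat) c : S =2 S' -> unfold_rel m S c =2 unfold_rel m S' c.
Proof. by move=> E a b; rewrite /unfold_rel !E. Qed.

Section Folding.

Variables (m : nat) (R : rel nat).
Hypotheses (eR : equiv_on (2 * m) R) (rR : rho_closed m R).

Let Rsym := equiv_on_sym eR.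
Let Rtrans := equiv_on_trans eR.

Lemma fold_rel_equiv : equiv_on m (fold_rel m R).
Proof.
split.
- by move=> a am; rewrite /fold_rel am (equiv_on_refl eR) //; lia.
- move=> a b /and3P[am bm /orP[Rab|Rab]]; rewrite /fold_rel am bm /=.
    by rewrite (Rsym Rab).
  by move: (rR (Rsym Rab)); rewrite rho_nat_hi rho_nat_lo // => ->; rewrite orbT.
- move=> a b c /and3P[am bm /orP[Rab|Rab]] /and3P[_ cm /orP[Rbc|Rbc]]; rewrite /fold_rel am cm /=.
  + by rewrite (Rtrans Rab Rbc).
  + by rewrite (Rtrans Rab Rbc) orbT.
  + by move: (rR Rbc); rewrite !rho_nat_lo // => /(Rtrans Rab) ->; rewrite orbT.
  + by move: (rR Rbc); rewrite rho_nat_lo // rho_nat_hi => /(Rtrans Rab) ->.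
- by move=> a b /and3P[-> -> _].
Qed.

Lemma fold_rel_fold_pt x y : x < 2 * m -> y < 2 * m ->
  fold_rel m R (fold_pt m x) (fold_pt m y) = R x y || R x (rho_nat m y).
Proof.
move=> xN yN; rewrite /fold_rel !fold_pt_lt //= -(rho_nat_lo (fold_pt_lt yN)).
have -> : R (fold_pt m x) (fold_pt m y) || R (fold_pt m x) (rho_nat m (fold_pt m y)) =
          R (fold_pt m x) y || R (fold_pt m x) (rho_nat m y).
  by case: (fold_pt_cases yN) => -> //; rewrite rho_natK // orbC.
case: (fold_pt_cases xN) => -> //.
by rewrite !rho_closedE ?rho_nat_lt // rho_natK // orbC.
Qed.

(* The classes not containing z stay inside the
   window [z, z + m) or its complement, so moving every point into the window
   identifies the folded relation with R restricted to the window (fold_relE). *)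
Variable z : nat.
Hypotheses (zm : z < m) (Rz : R z (z + m)).

Lemma rho_central x : R x z -> R (rho_nat m x) z.
Proof. by move/rR; rewrite (rho_nat_lo zm) => /Rtrans; apply; apply: Rsym. Qed.

Hypothesis ncR : noncrossing_rel (2 * m) R.

Lemma in_window_closed x y : R x y -> ~~ R x z -> in_window m z x -> in_window m z y.
Proof.
move=> Rxy nxz /andP[zx xzm]; apply/negPn/negP => nwy.
have /andP[xN yN] := equiv_on_dom eR Rxy.
have yz : y != z by apply: contraNneq nxz => <-.
have yzm : y != z + m by apply: contraNneq nxz => eyz; apply: Rtrans Rxy _; rewrite eyz; apply: Rsym.
have zx' : z < x.
  by rewrite ltn_neqAle zx andbT; apply: contraNneq nxz => ->; apply: (equiv_on_refl eR); lia.
case: (ltnP (z + m) y) => zmy.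
  have Rzx := ncR zx' xzm zmy yN Rz Rxy.
  by rewrite (Rsym Rzx) in nxz.
have y_z : y < z by move: nwy yz yzm; rewrite /in_window negb_and -!ltnNge; lia.
have Ryz : R y z by apply: (ncR y_z zx' xzm _ (Rsym Rxy) Rz); lia.
by rewrite (Rtrans Rxy Ryz) in nxz.
Qed.

Lemma in_window_same x y : R x y -> ~~ R x z -> in_window m z x = in_window m z y.
Proof.
move=> Rxy nxz; apply/idP/idP; first exact: in_window_closed.
by apply: in_window_closed (Rsym Rxy) _; apply: contra nxz; apply: Rtrans.
Qed.

Lemma to_window_rel x y : R x y -> R (to_window m z x) (to_window m z y).
Proof.
move=> Rxy; case Rxz: (R x z).
  have central w : R w z -> R (to_window m z w) z.
    by case: (to_window_cases m z w) => -> //; apply: rho_central.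
  exact: (Rtrans (central _ Rxz) (Rsym (central _ (Rtrans (Rsym Rxy) Rxz)))).
by rewrite /to_window -(in_window_same Rxy (negbT Rxz)); case: ifP => _ //; apply: rR.
Qed.

Lemma fold_relE i j : i < m -> j < m ->
  fold_rel m R i j = R (to_window m z i) (to_window m z j).
Proof.
move=> im jm; have [iN jN] : i < 2 * m /\ j < 2 * m by split; lia.
rewrite /fold_rel im jm /=; apply/idP/idP => [/orP[]Rij|].
- exact: to_window_rel.
- by move: (to_window_rel Rij); rewrite -(rho_nat_lo jm) to_window_rho.
case: (to_window_cases m z i) => ->; case: (to_window_cases m z j) => -> Rij.
- by rewrite Rij.
- by rewrite -(rho_nat_lo jm) Rij orbT.
- by move: (rR Rij); rewrite rho_natK // rho_nat_lo // => ->; rewrite orbT.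
- by move: (rR Rij); rewrite !rho_natK // => ->.
Qed.

Lemma fold_rel_noncrossing : noncrossing_rel m (fold_rel m R).
Proof.
move=> a b c d ab bc cd dm; rewrite !fold_relE; try lia.
apply: (noncrossing_rel_cyclic eR ncR); rewrite ?to_window_lt //; try lia.
by rewrite !to_window_lo; try lia; rewrite /cyclically_ordered; case_ifs; solve_cyclically_ordered.
Qed.

Lemma central_rel_rho x y : y < 2 * m -> R x (rho_nat m y) -> R x z -> R x y.
Proof.
move=> yN Rxy Rxz.
by move: (rho_central (Rtrans (Rsym Rxy) Rxz)); rewrite rho_natK // => /Rsym/(Rtrans Rxz).
Qed.

Lemma unfold_fold_rel : unfold_rel m (fold_rel m R) z =2 R.
Proof.
have foldz x : x < 2 * m -> fold_rel m R (fold_pt m x) z = R x z.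
  move=> xN; have zN : z < 2 * m by lia.
  rewrite -{1}(fold_pt_lo zm) (fold_rel_fold_pt xN zN) (rho_nat_lo zm).
  by apply/orP/idP => [[// | Rxz']|->]; [apply: Rtrans Rxz' (Rsym Rz) | left].
move=> a b; apply/idP/idP => [/and4P[aN bN]|Rab].
  rewrite fold_rel_fold_pt // foldz // => /orP[//|Rab] /orP[/(central_rel_rho bN Rab)//|/eqP W].
  case Raz: (R a z); first exact: central_rel_rho bN Rab Raz.
  by move: W; rewrite (in_window_same Rab (negbT Raz)) in_window_rho //; case: in_window.
have /andP[aN bN] := equiv_on_dom eR Rab.
rewrite /unfold_rel aN bN fold_rel_fold_pt // Rab foldz //=.
by case Raz: (R a z); rewrite //= (in_window_same Rab (negbT Raz)).
Qed.

Lemma card_fold_class (i : 'I_m) : ~~ fold_rel m R i z ->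
  #|[set j : 'I_m | fold_rel m R i j]| = #|[set y : 'I_(2 * m) | R (to_window m z i) y]|.
Proof.
move=> niz; have ltm (j : 'I_m) : j < 2 * m by have := ltn_ord j; lia.
pose phi j := Ordinal (to_window_lt z (ltm j)).
have phi_inj : injective phi.
  move=> a b /(congr1 val) /=; rewrite !to_window_lo //.
  by have := ltn_ord a; have := ltn_ord b; case_ifs => ? ? ?; apply: ord_inj; lia.
rewrite -(card_imset _ phi_inj); apply: eq_card => y; rewrite [y \in [set _ | _]]inE.
apply/imsetP/idP => [[j]|Riy]; first by rewrite inE fold_relE // => ? ->.
have iw : in_window m z (to_window m z i).
  by have := ltn_ord i; rewrite to_window_lo // /in_window; case_ifs; lia.
have niz' : ~~ R (to_window m z i) z.
  by apply: contra niz; rewrite fold_relE // (to_window_lo _ zm) leqnn.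
have yw := in_window_closed Riy niz' iw.
have yN := ltn_ord y; exists (Ordinal (fold_pt_lt yN)).
  by rewrite inE fold_relE ?fold_pt_lt //= to_window_fold_pt.
by apply: val_inj; rewrite /= to_window_fold_pt.
Qed.

End Folding.

Section NoncrossingSides.

Variables (m : nat) (S : rel nat).
Hypotheses (eS : equiv_on m S) (ncS : noncrossing_rel m S).

Let Ssym := equiv_on_sym eS.
Let Strans := equiv_on_trans eS.

Lemma noncrossing_rel_inside u v a b :
  S u v -> S a b -> ~~ S u a -> u < a < v -> u < b < v.
Proof.
move=> Suv Sab nua /andP[ua av].
have nub : ~~ S u b by apply: contra nua => /Strans; apply; apply: Ssym.
have /andP[um vm] := equiv_on_dom eS Suv; have /andP[_ bm] := equiv_on_dom eS Sab.
have bu : b != u by apply: contraNneq nub => ->; apply: (equiv_on_refl eS).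
have bv : b != v by apply: contraNneq nub => ->.
case: (ltnP b u) => [b_u|ub].
  have Sbu := ncS b_u ua av vm (Ssym Sab) Suv.
  by rewrite (Ssym Sbu) in nub.
case: (ltnP v b) => [v_b|bv']; last by apply/andP; split; lia.
have Sua := ncS ua av v_b bm Suv Sab.
by rewrite Sua in nua.
Qed.

(* [(x <= u) == (x <= v)] says that x is not in the arc between u and v, the larger
   endpoint included. *)
Lemma noncrossing_rel_same_side u v c1 c2 : S u v -> S c1 c2 -> ~~ S u c2 ->
  ((c1 <= u) == (c1 <= v)) = ((c2 <= u) == (c2 <= v)).
Proof.
wlog uv : u v / u <= v => [hwlog Suv S12 nu2|].
  case: (leqP u v) => [uv|vu]; first exact: hwlog uv Suv S12 nu2.
  rewrite ![(_ <= u) == _]eq_sym; apply: hwlog (ltnW vu) (Ssym Suv) S12 _.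
  by apply: contra nu2; apply: Strans.
move=> Suv S12 nu2; have nu1 : ~~ S u c1 by apply: contra nu2 => /Strans; apply.
have ne c : ~~ S u c -> (c != u) && (c != v).
  move=> nuc; apply/andP; split; apply: contraNneq nuc => ->//.
  by apply: (equiv_on_refl eS); have /andP[] := equiv_on_dom eS Suv.
have outside c : c != u -> c != v -> ((c <= u) == (c <= v)) = ~~ (u < c < v).
  by move=> cu cv; apply/eqP/negP; rewrite ?neq_ltn in cu cv; lia.
have /andP[? ?] := ne _ nu1; have /andP[? ?] := ne _ nu2.
rewrite !outside //; congr negb; apply/idP/idP; first exact: noncrossing_rel_inside.
by apply: noncrossing_rel_inside (Ssym S12) _.
Qed.

Lemma noncrossing_rel0 p q r : p < q -> q < r -> r < m -> S 0 q -> S p r -> S 0 p.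
Proof.
move=> pq qr rm S0q Spr; case: (posnP p) => [->|p0]; first by apply: (equiv_on_refl eS); lia.
exact: (ncS p0 pq qr rm S0q Spr).
Qed.

End NoncrossingSides.

Section Halves.

Variable m : nat.

Definition lo_ord (u : 'I_m) : 'I_(2 * m) := widen_ord (leq_pmull m (isT : 0 < 2)) u.

Lemma hi_ord_subproof (u : 'I_m) : u + m < 2 * m.
Proof. by have := ltn_ord u; lia. Qed.

Definition hi_ord (u : 'I_m) : 'I_(2 * m) := Ordinal (hi_ord_subproof u).

Lemma lo_ord_inj : injective lo_ord.
Proof. by move=> u v /(congr1 val) /= /ord_inj. Qed.

Lemma hi_ord_inj : injective hi_ord.
Proof. by move=> u v /(congr1 val) /= ?; apply: ord_inj; lia. Qed.

Lemma fold_pt_lo_ord u : fold_pt m (lo_ord u) = u.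
Proof. exact: (fold_pt_lo (ltn_ord u)). Qed.

Lemma fold_pt_hi_ord u : fold_pt m (hi_ord u) = u.
Proof. exact: fold_pt_hi. Qed.

Lemma lo_or_hi_ord (y : 'I_(2 * m)) : exists u, y = lo_ord u \/ y = hi_ord u.
Proof.
have yN := ltn_ord y; set u := Ordinal (fold_pt_lt yN); exists u.
by case: (ltnP y m) => ym; [left | right]; apply: ord_inj => /=; rewrite /fold_pt; case_ifs; lia.
Qed.

Lemma lo_ord_in_hi u (B : {set 'I_m}) : (lo_ord u \in hi_ord @: B) = false.
Proof. by apply/imsetP => -[v _ /(congr1 val) /=]; have := ltn_ord u; lia. Qed.

Lemma hi_ord_in_lo u (B : {set 'I_m}) : (hi_ord u \in lo_ord @: B) = false.
Proof. by apply/imsetP => -[v _ /(congr1 val) /=]; have := ltn_ord v; lia. Qed.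

Lemma disjoint_lo_hi (A B : {set 'I_m}) : [disjoint lo_ord @: A & hi_ord @: B].
Proof.
rewrite -setI_eq0; apply/eqP/setP => y; rewrite !inE.
by apply/negP => /andP[/imsetP[u _ ->]]; rewrite lo_ord_in_hi.
Qed.

Lemma card_lo_hi (A B : {set 'I_m}) : #|lo_ord @: A :|: hi_ord @: B| = #|A| + #|B|.
Proof.
rewrite -(card_imset A lo_ord_inj) -(card_imset B hi_ord_inj).
by apply/eqP; rewrite (leq_card_setU _ _).2 disjoint_lo_hi.
Qed.

Lemma card_fold_pt_preim (p : pred nat) :
  #|[set y : 'I_(2 * m) | p (fold_pt m y)]| = 2 * #|[set u : 'I_m | p u]|.
Proof.
set D := [set u : 'I_m | p u].
have -> : [set y : 'I_(2 * m) | p (fold_pt m y)] = lo_ord @: D :|: hi_ord @: D.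
  apply/setP => y; rewrite !inE; have [u [->|->]] := lo_or_hi_ord y.
    by rewrite fold_pt_lo_ord mem_imset ?inE; [rewrite lo_ord_in_hi orbF | apply: lo_ord_inj].
  by rewrite fold_pt_hi_ord (mem_imset _ _ hi_ord_inj) hi_ord_in_lo inE.
by rewrite card_lo_hi addnn -mul2n.
Qed.

Lemma card_fold_pt_section (p q : pred nat) :
  #|[set y : 'I_(2 * m) | p (fold_pt m y) && ((y < m) == q (fold_pt m y))]| =
  #|[set u : 'I_m | p u]|.
Proof.
pose phi (u : 'I_m) := if q u then lo_ord u else hi_ord u.
have phi_inj : injective phi.
  move=> u v; rewrite /phi; have := ltn_ord u; have := ltn_ord v.
  by case: ifP => _; case: ifP => _ ? ? /(congr1 val) /= ?; apply: ord_inj; lia.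
rewrite -(card_imset _ phi_inj); apply: eq_card => y; rewrite inE.
have [u [->|->]] := lo_or_hi_ord y.
  rewrite fold_pt_lo_ord /= ltn_ord; apply/andP/imsetP => [[pu /eqP qu]|[v]].
    by exists u; rewrite ?inE // /phi -qu.
  rewrite inE /phi => pv; case: ifP => qv /(congr1 val) /= uv; have := ltn_ord u; last lia.
  by rewrite (ord_inj uv) qv.
rewrite fold_pt_hi_ord /= ltnNge leq_addl /=; apply/andP/imsetP => [[pu qu]|[v]].
  by exists u; rewrite ?inE // /phi (negbTE qu).
rewrite inE /phi => pv; case: ifP => qv /(congr1 val) /= uv; have := ltn_ord v; first lia.
move=> _; have -> : u = v by apply: ord_inj; lia.
by rewrite qv.
Qed.

End Halves.

Section Unfolding.

Variables (m : nat) (S : rel nat) (c : nat).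
Hypotheses (eS : equiv_on m S) (cm : c < m).

Let Ssym := equiv_on_sym eS.
Let Strans := equiv_on_trans eS.

Lemma unfold_rel_equiv : equiv_on (2 * m) (unfold_rel m S c).
Proof.
split.
- by move=> a aN; rewrite /unfold_rel aN (equiv_on_refl eS) ?eqxx ?orbT // fold_pt_lt.
- move=> a b /and4P[aN bN Sab Sac]; rewrite /unfold_rel aN bN (Ssym Sab) /=.
  case/orP: Sac => [Sac|/eqP->]; last by rewrite eqxx orbT.
  by rewrite (Strans (Ssym Sab) Sac).
- move=> a b d /and4P[aN _ Sab Sac] /and4P[_ dN Sbd Sbc].
  rewrite /unfold_rel aN dN (Strans Sab Sbd) /=.
  case/orP: Sac => [->//|/eqP->]; case/orP: Sbc => [Sbc|->]; last by rewrite orbT.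
  by rewrite (Strans Sab Sbc).
- by move=> a b /and4P[-> -> _ _].
Qed.

Lemma unfold_rel_rho : rho_closed m (unfold_rel m S c).
Proof.
move=> x y /and4P[xN yN Sxy Sxc].
rewrite /unfold_rel !rho_nat_lt // !fold_pt_rho // Sxy !in_window_rho //.
by case/orP: Sxc => [->//|/eqP->]; rewrite eqxx orbT.
Qed.

Lemma fold_unfold_rel : fold_rel m (unfold_rel m S c) =2 S.
Proof.
move=> a b; apply/and3P/idP => [[am bm]|Sab].
  by rewrite /unfold_rel fold_pt_hi !fold_pt_lo // => /orP[]/and4P[].
have /andP[am bm] := equiv_on_dom eS Sab; split=> //.
rewrite /unfold_rel fold_pt_hi !fold_pt_lo // Sab in_window_hi //; apply/orP.
have [aN bN bmN] : [/\ a < 2 * m, b < 2 * m & b + m < 2 * m] by split; lia.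
rewrite aN bN bmN; case: (S a c); case: (in_window m c a); case: (in_window m c b).
all: first [by left | by right].
Qed.

Lemma card_unfold_class_central (x : 'I_(2 * m)) : S (fold_pt m x) c ->
  #|[set y : 'I_(2 * m) | unfold_rel m S c x y]| = 2 * #|[set u : 'I_m | S c u]|.
Proof.
move=> Sxc; rewrite -card_fold_pt_preim; apply: eq_card => y; rewrite !inE.
rewrite /unfold_rel !ltn_ord Sxc /= andbT.
by apply/idP/idP => [/(Strans (Ssym Sxc))|/(Strans Sxc)].
Qed.

Lemma card_unfold_class (x : 'I_(2 * m)) : ~~ S (fold_pt m x) c ->
  #|[set y : 'I_(2 * m) | unfold_rel m S c x y]| = #|[set u : 'I_m | S (fold_pt m x) u]|.
Proof.
move=> nxc; rewrite -(card_fold_pt_section m (S (fold_pt m x)) (fun u => (c <= u) == in_window m c x)).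
apply: eq_card => y; rewrite !inE /unfold_rel !ltn_ord (negbTE nxc) /=.
rewrite (in_window_fold_pt cm (ltn_ord y)).
by case: (S _ _); case: (in_window m c x); case: (c <= _); case: (y < m).
Qed.

End Unfolding.

Section UnfoldNoncrossing.

Variables (m : nat) (S : rel nat).
Hypotheses (eS : equiv_on m S) (ncS : noncrossing_rel m S).

Let Ssym := equiv_on_sym eS.
Let Strans := equiv_on_trans eS.

Lemma unfold_rel0_noncrossing : noncrossing_rel (2 * m) (unfold_rel m S 0).
Proof.
move=> a b c d ab bc cd dN /and4P[_ _ + +] /and4P[_ _ + +].
have [aN bN] : a < 2 * m /\ b < 2 * m by split; lia.
rewrite /unfold_rel aN bN !in_window0 /=.
case: (ltnP d m) => dm.
  have [am bm cm] : [/\ a < m, b < m & c < m] by split; lia.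
  rewrite !fold_pt_lo // am bm => Sac _ Sbd _.
  by rewrite orbT andbT; exact: (ncS ab bc cd dm Sac Sbd).
case: (ltnP c m) => cm.
  have [am bm] : a < m /\ b < m by split; lia.
  rewrite (fold_pt_ge dm) !fold_pt_lo // am bm /= orbF => Sac _ _ Sb0.
  have S0a := noncrossing_rel0 eS ncS ab bc cm (Ssym Sb0) Sac.
  by rewrite (Strans (Ssym S0a) (Ssym Sb0)) orbT.
case: (ltnP b m) => bm.
  have am : a < m by lia.
  rewrite (fold_pt_lo am) (fold_pt_lo bm) am /= !orbF => _ Sa0 _ Sb0.
  by rewrite Sa0 (Strans Sa0 (Ssym Sb0)).
rewrite (fold_pt_ge bm) (fold_pt_ge cm) (fold_pt_ge dm).
case: (ltnP a m) => am.
  rewrite (fold_pt_lo am) /= !orbF => Sac Sa0 Sbd _.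
  have S0b : S 0 (b - m).
    by apply: (noncrossing_rel0 eS ncS _ _ _ (Ssym (Strans (Ssym Sac) Sa0)) Sbd); lia.
  by rewrite Sa0 (Strans Sa0 S0b).
rewrite (fold_pt_ge am) => Sac _ Sbd _.
by rewrite orbT andbT; apply: (ncS _ _ _ _ Sac Sbd); lia.
Qed.

End UnfoldNoncrossing.

(* Shifting [2m] back by c and [m] forward by c moves the window [c, c + m) to
   [0, m). *)
Lemma unfold_rel_cshift m S c x y : c < m -> x < 2 * m -> y < 2 * m ->
  unfold_rel m S c x y = cshift_rel (2 * m) (unfold_rel m (cshift_rel m S c) 0) (2 * m - c) x y.
Proof.
move=> cm xN yN; have m0 : 0 < m by lia.
have cshift_lt' u : u < 2 * m -> cshift (2 * m) (2 * m - c) u < 2 * m by apply: cshift_lt; lia.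
have cshiftK u : u < 2 * m -> cshift m c (fold_pt m (cshift (2 * m) (2 * m - c) u)) = fold_pt m u.
  by move=> uN; rewrite /cshift /fold_pt; case_ifs; lia.
have cshift_window u : u < 2 * m -> (cshift (2 * m) (2 * m - c) u < m) = in_window m c u.
  by move=> uN; rewrite /cshift /in_window; case_ifs; apply/idP/idP; lia.
have cshift0 : cshift m c 0 = c by rewrite /cshift add0n cm.
rewrite /cshift_rel /unfold_rel xN yN !cshift_lt' //.
rewrite (fold_pt_lt (cshift_lt' _ xN)) (fold_pt_lt (cshift_lt' _ yN)).
by rewrite (cshiftK x xN) (cshiftK y yN) cshift0 !in_window0 !cshift_window // m0.
Qed.

Lemma unfold_rel_noncrossing m S c : equiv_on m S -> noncrossing_rel m S -> c < m ->
  noncrossing_rel (2 * m) (unfold_rel m S c).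
Proof.
move=> eS ncS cm.
have eSc := cshift_rel_equiv eS (ltnW cm); have ncSc := cshift_rel_noncrossing eS ncS (ltnW cm).
have e0 := unfold_rel_equiv 0 eSc.
apply: noncrossing_rel_eq (cshift_rel_noncrossing e0 (unfold_rel0_noncrossing eSc ncSc) (leq_subr c _)).
by move=> a b aN bN; rewrite unfold_rel_cshift.
Qed.

Lemma unfold_rel_mono m S S' c c' : equiv_on m S' -> noncrossing_rel m S' ->
  subrel S S' -> S' c c' -> c < m -> c' < m ->
  subrel (unfold_rel m S c) (unfold_rel m S' c').
Proof.
move=> eS' ncS' sub Scc' cm c'm a b /and4P[aN bN Sab Kab].
rewrite /unfold_rel aN bN (sub _ _ Sab) /=.
case/orP: Kab => [Sac|/eqP W]; first by rewrite (equiv_on_trans eS' (sub _ _ Sac) Scc').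
case Sac': (S' (fold_pt m a) c') => //=.
have := noncrossing_rel_same_side eS' ncS' (sub _ _ Sab) Scc' (negbT Sac').
move: W; rewrite !in_window_fold_pt //.
by case: (c <= _); case: (c <= _); case: (c' <= _); case: (c' <= _); case: (a < m); case: (b < m).
Qed.

(** * The isomorphism *)

Definition sym_nc (k m : nat) (P : {set {set 'I_(2 * m)}}) : Prop :=
  [/\ set_partition P, noncrossing P, (forall B, B \in P -> 2 * k %| #|B|) & rho_invariant P].

Definition nc_exc (k m : nat) (Q : {set {set 'I_m}}) : Prop :=
  [/\ set_partition Q, noncrossing Q
    & exists B0, B0 \in Q /\ forall B, B \in Q -> B != B0 -> 2 * k %| #|B|].

Definition fold_partition m (P : {set {set 'I_(2 * m)}}) : {set {set 'I_m}} :=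
  rel_partition m (fold_rel m (block_rel P)).

Lemma fold_partition_block_rel m (P : {set {set 'I_(2 * m)}}) :
  partition P setT -> rho_invariant P ->
  block_rel (fold_partition P) =2 fold_rel m (block_rel P).
Proof.
move=> pP rP; apply: block_rel_partition.
exact: fold_rel_equiv (block_rel_equiv pP) ((rho_invariantE pP).1 rP).
Qed.

(* Defaults to 0 when every block has size divisible by 2k. *)
Definition exc_point k m (Q : {set {set 'I_m}}) : nat :=
  if [pick i : 'I_m | ~~ (2 * k %| #|pblock Q i|)] is Some i then val i else 0.

Definition unfold_partition k m (Q : {set {set 'I_m}}) : {set {set 'I_(2 * m)}} :=
  rel_partition (2 * m) (unfold_rel m (block_rel Q) (exc_point k Q)).

Arguments sym_nc : clear implicits.
Arguments nc_exc : clear implicits.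

Section OddMultiple.

Variables k m : nat.
Hypothesis m_odd : ~~ (2 * k %| m).

Lemma sym_nc_central (P : {set {set 'I_(2 * m)}}) : sym_nc k m P ->
  exists2 z, z < m & block_rel P z (z + m).
Proof.
move=> [pP _ dvdP rP]; have rR := (rho_invariantE pP).1 rP; have tP := partition_trivIset pP.
have eP := block_rel_equiv pP.
case: (boolP [exists x : 'I_(2 * m), block_rel P x (rho_nat m x)]) => [/existsP[x Rx]|].
  exact: rho_pair_central eP (ltn_ord x) Rx.
move=> /existsPn noncentral; exfalso; move/negP: m_odd; apply.
have rho_block (x y : 'I_(2 * m)) : y \in pblock P x -> rho_ord y \in pblock P (rho_ord x).
  by move: (rR x y); rewrite -[rho_nat m x]/(val (rho_ord x)) -[rho_nat m y]/(val (rho_ord y)) !block_relE.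
have ne x : pblock P (rho_ord x) != pblock P x.
  apply: contra (noncentral x) => /eqP e.
  by rewrite -[rho_nat m x]/(val (rho_ord x)) block_relE -e mem_pblock_partition.
(* U picks, out of each pair of blocks {B, rho B}, the one of smaller rank. *)
pose U := [set x | enum_rank (pblock P x) < enum_rank (pblock P (rho_ord x))].
rewrite -(@card_rho_half m U) => [|x].
  apply: dvdn_card_closed pP dvdP _ => x y; rewrite !inE => xU yx.
  by rewrite (same_pblock tP yx) (same_pblock tP (rho_block _ _ yx)).
rewrite !inE rho_ordK -leqNgt ltn_neqAle andb_idl // => _.
by apply: contra (ne x) => /eqP/ord_inj/enum_rank_inj ->.
Qed.

Lemma fold_partition_block_dvdn (P : {set {set 'I_(2 * m)}}) z (i : 'I_m) :
  sym_nc k m P -> z < m -> block_rel P z (z + m) -> ~~ fold_rel m (block_rel P) i z ->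
  2 * k %| #|pblock (fold_partition P) i|.
Proof.
move=> [pP ncP dvdP rP] zm Rz niz.
have eP := block_rel_equiv pP; have rR := (rho_invariantE pP).1 rP.
have ncR := (noncrossingE pP).1 ncP.
rewrite (pblock_rel_partition (fold_rel_equiv eP rR)) (card_fold_class eP rR zm Rz ncR niz).
have iN : i < 2 * m by have := ltn_ord i; lia.
set y := Ordinal (to_window_lt z iN).
have -> : [set w : 'I_(2 * m) | block_rel P (to_window m z i) w] = pblock P y.
  by apply/setP => w; rewrite inE -[to_window m z i]/(val y) block_relE.
exact/dvdP/pblock_partition.
Qed.

Lemma fold_partition_nc_exc (P : {set {set 'I_(2 * m)}}) :
  sym_nc k m P -> nc_exc k m (fold_partition P).
Proof.
move=> sP; have [z zm Rz] := sym_nc_central sP; have [pP ncP _ rP] := sP.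
have eP := block_rel_equiv pP; have rR := (rho_invariantE pP).1 rP.
have pF : partition (fold_partition P) setT by apply/rel_partitionP/fold_rel_equiv.
have FE := fold_partition_block_rel pP rP.
split => //.
  apply/(noncrossingE pF)/(noncrossing_rel_eq _ (fold_rel_noncrossing eP rR zm Rz _)).
    by move=> a b _ _; rewrite FE.
  exact/noncrossingE.
exists (pblock (fold_partition P) (Ordinal zm)); split; first exact: pblock_partition.
move=> B BF; have /set0Pn[i iB] := partition_neq0 pF BF.
rewrite -(def_pblock (partition_trivIset pF) BF iB) => neB.
apply: (fold_partition_block_dvdn sP zm Rz); apply: contra neB => Fiz.
by rewrite eq_sym -(same_pblock (partition_trivIset pF) (_ : Ordinal zm \in _)) // -block_relE FE.
Qed.

Hypothesis k_m : k %| m.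

Lemma exc_pointP (Q : {set {set 'I_m}}) : nc_exc k m Q ->
  exists2 c : 'I_m, c = exc_point k Q :> nat &
  [/\ ~~ (2 * k %| #|pblock Q c|), k %| #|pblock Q c|
     & forall B, B \in Q -> c \notin B -> 2 * k %| #|B|].
Proof.
move=> [pQ _ [B0 [B0Q dvdQ]]].
have sumQ : m = \sum_(B in Q) #|B| by rewrite -(card_partition pQ) cardsT card_ord.
have B0nd : ~~ (2 * k %| #|B0|).
  apply: contra m_odd => dvdB0; rewrite sumQ; apply: dvdn_sum => B BQ.
  by case: (eqVneq B B0) => [->|]; last exact: dvdQ.
rewrite /exc_point; case: pickP => [c nc|none]; last first.
  have /set0Pn[i iB0] := partition_neq0 pQ B0Q.
  by move: (none i); rewrite (def_pblock (partition_trivIset pQ) B0Q iB0) B0nd.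
have ec : pblock Q c = B0.
  by apply/eqP; apply: contraNT nc => /(dvdQ _ (pblock_partition c pQ)).
exists c => //; rewrite ec; split => //.
  move: k_m; rewrite {1}sumQ (bigD1 B0) //= dvdn_addl //.
  apply: dvdn_sum => B /andP[BQ neB].
  exact: dvdn_trans (dvdn_mull 2 (dvdnn k)) (dvdQ _ BQ neB).
move=> B BQ cB; apply: dvdQ => //; apply: contraNneq cB => ->.
by rewrite -ec mem_pblock_partition.
Qed.

Lemma fold_partition_exc_central (P : {set {set 'I_(2 * m)}}) : sym_nc k m P ->
  exists2 c : 'I_m, c = exc_point k (fold_partition P) :> nat & block_rel P c (c + m).
Proof.
move=> sP; have [z zm Rz] := sym_nc_central sP; have [pP _ _ rP] := sP.
have eP := block_rel_equiv pP; have rR := (rho_invariantE pP).1 rP.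
have [c ec [ndc _ _]] := exc_pointP (fold_partition_nc_exc sP); exists c => //.
have /and3P[_ _ Fcz] : fold_rel m (block_rel P) c z.
  by apply/negPn; apply: contra ndc; apply: fold_partition_block_dvdn sP zm Rz.
have Rcz : block_rel P c z.
  by case/orP: Fcz => // Rc; apply: (equiv_on_trans eP Rc (equiv_on_sym eP Rz)).
have := rho_central eP rR zm Rz Rcz; rewrite rho_nat_lo // => Rcz'.
exact: (equiv_on_trans eP Rcz (equiv_on_sym eP Rcz')).
Qed.

Lemma unfold_partition_sym_nc (Q : {set {set 'I_m}}) :
  nc_exc k m Q -> sym_nc k m (unfold_partition k Q).
Proof.
move=> eQ; have [c ec [_ dvdc dvdQ]] := exc_pointP eQ; have [pQ ncQ _] := eQ.
have eS := block_rel_equiv pQ; have cm : exc_point k Q < m by rewrite -ec ltn_ord.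
have eU := unfold_rel_equiv (exc_point k Q) eS.
have pU : partition (unfold_partition k Q) setT := rel_partitionP eU.
have UE := block_rel_partition eU.
split => //.
- apply/(noncrossingE pU).
  apply: noncrossing_rel_eq (unfold_rel_noncrossing eS ((noncrossingE pQ).1 ncQ) cm).
  by move=> a b _ _; rewrite UE.
- move=> B BU; have /set0Pn[x xB] := partition_neq0 pU BU.
  rewrite -(def_pblock (partition_trivIset pU) BU xB) (pblock_rel_partition eU).
  have xN := ltn_ord x; set u := Ordinal (fold_pt_lt xN).
  have blockE (v : 'I_m) : [set w : 'I_m | block_rel Q v w] = pblock Q v.
    by apply/setP => w; rewrite inE block_relE.
  case Sxc: (block_rel Q (fold_pt m x) (exc_point k Q)).
    by rewrite (card_unfold_class_central eS Sxc) -ec blockE dvdn_pmul2l.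
  rewrite (card_unfold_class cm (negbT Sxc)) -[fold_pt m x]/(val u) blockE.
  apply: dvdQ; first exact: pblock_partition.
  by apply: contraFN Sxc => cu; rewrite -ec -[fold_pt m x]/(val u) block_relE.
- by apply/(rho_invariantE pU) => a b; rewrite !UE; apply: unfold_rel_rho.
Qed.

Lemma unfold_partition_block_rel (Q : {set {set 'I_m}}) : partition Q setT ->
  block_rel (unfold_partition k Q) =2 unfold_rel m (block_rel Q) (exc_point k Q).
Proof. by move=> pQ; apply/block_rel_partition/unfold_rel_equiv/block_rel_equiv. Qed.

Lemma unfold_fold_partition (P : {set {set 'I_(2 * m)}}) :
  sym_nc k m P -> unfold_partition k (fold_partition P) = P.
Proof.
move=> sP; have [pP ncP _ rP] := sP; have [pF _ _] := fold_partition_nc_exc sP.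
have [c ec Rc] := fold_partition_exc_central sP.
apply: block_rel_inj => //; first by have [] := unfold_partition_sym_nc (fold_partition_nc_exc sP).
move=> a b; rewrite unfold_partition_block_rel // -ec.
rewrite (unfold_rel_ext _ _ (fold_partition_block_rel pP rP)).
have eP := block_rel_equiv pP; have rR := (rho_invariantE pP).1 rP.
exact: (unfold_fold_rel eP rR (ltn_ord c) Rc ((noncrossingE pP).1 ncP)).
Qed.

Lemma fold_unfold_partition (Q : {set {set 'I_m}}) :
  nc_exc k m Q -> fold_partition (unfold_partition k Q) = Q.
Proof.
move=> eQ; have [pQ _ _] := eQ; have [pU _ _ rU] := unfold_partition_sym_nc eQ.
have [c ec _] := exc_pointP eQ; have cm : exc_point k Q < m by rewrite -ec ltn_ord.
apply: block_rel_inj => //; first by have [] := fold_partition_nc_exc (unfold_partition_sym_nc eQ).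
move=> a b; rewrite fold_partition_block_rel // (fold_rel_ext _ (unfold_partition_block_rel pQ)).
exact: (fold_unfold_rel (block_rel_equiv pQ) cm).
Qed.

Lemma exc_point_mono (Q Q' : {set {set 'I_m}}) : nc_exc k m Q -> nc_exc k m Q' ->
  subrel (block_rel Q) (block_rel Q') -> block_rel Q' (exc_point k Q) (exc_point k Q').
Proof.
move=> eQ eQ' sub; have [pQ _ _] := eQ; have [pQ' _ _] := eQ'.
have [c <- [ndc _ dvdQ]] := exc_pointP eQ; have [c' <- [_ _ dvdQ']] := exc_pointP eQ'.
rewrite block_relE; apply/negPn; apply: contra ndc => nc'.
have closedU (x y : 'I_m) : x \in pblock Q' c -> y \in pblock Q x -> y \in pblock Q' c.
  move=> xc yx; rewrite -(same_pblock (partition_trivIset pQ') xc) -block_relE.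
  by apply: sub; rewrite block_relE.
have : 2 * k %| #|pblock Q' c| by apply: dvdQ'; first exact: pblock_partition.
have cQ : pblock Q c \in [set B in Q | B \subset pblock Q' c].
  rewrite inE pblock_partition //=; apply/subsetP => y; apply: closedU.
  by rewrite -block_relE; apply/sub/(equiv_on_refl (block_rel_equiv pQ))/ltn_ord.
rewrite (card_closed_union pQ closedU) (bigD1 _ cQ) /= dvdn_addl //.
apply: dvdn_sum => B /andP[/setIdP[BQ _] neB]; apply: dvdQ => //.
by apply: contra neB => cB; rewrite (def_pblock (partition_trivIset pQ) BQ cB).
Qed.

Lemma unfold_partition_mono (Q Q' : {set {set 'I_m}}) : nc_exc k m Q -> nc_exc k m Q' ->
  subrel (block_rel Q) (block_rel Q') ->
  subrel (block_rel (unfold_partition k Q)) (block_rel (unfold_partition k Q')).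
Proof.
move=> eQ eQ' sub; have [pQ _ _] := eQ; have [pQ' ncQ' _] := eQ'.
have [c ec _] := exc_pointP eQ; have [c' ec' _] := exc_pointP eQ'.
have cm : exc_point k Q < m by rewrite -ec ltn_ord.
have c'm : exc_point k Q' < m by rewrite -ec' ltn_ord.
move=> a b; rewrite !unfold_partition_block_rel //.
exact: (unfold_rel_mono (block_rel_equiv pQ') ((noncrossingE pQ').1 ncQ') sub
  (exc_point_mono eQ eQ' sub) cm c'm).
Qed.

Theorem sym_nc_iso_nc_exc : poset_iso (sym_nc k m) (nc_exc k m).
Proof.
exists (@fold_partition m); split.
- exact: fold_partition_nc_exc.
- by move=> P P' sP sP' eF; rewrite -(unfold_fold_partition sP) eF unfold_fold_partition.
- move=> Q eQ; exists (unfold_partition k Q).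
  by split; [apply: unfold_partition_sym_nc | apply: fold_unfold_partition].
move=> P P' sP sP'; have [pP _ _ rP] := sP; have [pP' _ _ rP'] := sP'.
have [pF _ _] := fold_partition_nc_exc sP; have [pF' _ _] := fold_partition_nc_exc sP'.
rewrite (refinesE pP pP') (refinesE pF pF'); split => sub.
  by move=> a b; rewrite !fold_partition_block_rel //; apply: fold_rel_mono.
rewrite -(unfold_fold_partition sP) -(unfold_fold_partition sP').
exact: unfold_partition_mono (fold_partition_nc_exc sP) (fold_partition_nc_exc sP') sub.
Qed.

End OddMultiple.

Theorem theorem6p1 (n k : nat) : (0 < n)%N -> (0 < k)%N ->
  poset_iso (@NCtilde k n) (@NCr (2 * k) n k).
Proof.
move=> _ k_gt0.
change (poset_iso (sym_nc k (k * (2 * n + 1))) (nc_exc k (2 * k * n + k))).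
have -> : k * (2 * n + 1) = 2 * k * n + k by rewrite mulnDr muln1 mulnA (mulnC k).
apply: sym_nc_iso_nc_exc.
  rewrite (dvdn_addr _ (dvdn_mulr n (dvdnn (2 * k)))); apply/negP => dvd_k.
  by have := dvdn_leq k_gt0 dvd_k; lia.
by rewrite dvdn_add // mulnAC dvdn_mull.
Qed.
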